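(* Let $X$ and $Y$ be $\mathbb{N}$-valued random variables with $P\{X=0\}\ne1$, $P\{Y=0\}\neq 1$ and $\mathbb{E}[X^r+Y^r]<+\infty$ for some $r\in(1,2]$, and set $\alpha_r=\mathbb{E}[X]^r+\mathbb{E}[Y]^r-1$. Let $f^{(1)}_t$ and $f^{(2)}_t$ be the solutions of the kinetic equation (defined in the context) with initial probability densities $f_0^{(1)}$ and $f_0^{(2)}$ on $\mathbb{N}$ such that $\sum_v vf_0^{(1)}(v)=\sum_v vf_0^{(2)}(v)=m_0$. Then for every $t>0$ $$d_r(f_t^{(1)},f_t^{(2)})\le d_r(f_0^{(1)},f_0^{(2)})\,e^{\alpha_r t}\quad\text{and}\quad d_r^*(f_t^{(1)},f_t^{(2)})\le d_r^*(f_0^{(1)},f_0^{(2)})\,e^{\alpha_r t}.$$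
   Context: For a probability density $f$ on $\mathbb{N}$, $\hat f(z)=\sum_{v\ge0}z^vf(v)$ ($z\in[0,1]$) is its probability generating function and $\tilde f(\xi)=\sum_{v\ge0}e^{-\xi v}f(v)$ ($\xi>0$) its Laplace transform. Let $\hat p_X(z)=\mathbb{E}[z^X]$, $\hat p_Y(z)=\mathbb{E}[z^Y]$. The kinetic equation is $\partial_t f_t(v)=Q^+(f_t,f_t)(v)-f_t(v)$ on $\mathbb{N}$, where $Q^+(f,g)(v)=P\{\sum_{i=1}^{V_1}Y_i+\sum_{i=1}^{V_2}X_i=v\}$, $V_1\sim f$, $V_2\sim g$, $X_i$ i.i.d. $\sim X$, $Y_i$ i.i.d. $\sim Y$, all independent; equivalently $\partial_t\hat f_t(z)=\hat f_t(\hat p_X(z))\hat f_t(\hat p_Y(z))-\hat f_t(z)$, $z\in[0,1]$, which has a unique global solution for each initial probability density. The metrics are $$d_r(f,g)=\sup_{z\in(0,1)}\frac{|\hat f(z)-\hat g(z)|}{|1-z|^r},\qquad d_r^*(f,g)=\sup_{\xi>0}\frac{|\tilde f(\xi)-\tilde g(\xi)|}{\xi^r}.$$ *)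

From Stdlib Require Import Reals.
From Coquelicot Require Import Coquelicot.
Open Scope R_scope.

(* x^r for x >= 0 and real r > 0, with the convention 0^r = 0
   (Stdlib's Rpower 0 r would give 1). *)
Definition rpow (x r : R) : R := if Rle_dec x 0 then 0 else Rpower x r.

Definition is_pdens (f : nat -> R) : Prop :=
  (forall v, 0 <= f v) /\ is_series f 1.

Definition pgf (f : nat -> R) (z : R) : R := Series (fun v => z ^ v * f v).

Definition laplace (f : nat -> R) (xi : R) : R :=
  Series (fun v => exp (- xi * INR v) * f v).

Definition mean (f : nat -> R) : R := Series (fun v => INR v * f v).

Definition finite_rmoment (f : nat -> R) (r : R) : Prop :=
  ex_series (fun v => rpow (INR v) r * f v).

Definition d_r (r : R) (f g : nat -> R) : Rbar :=
  Lub_Rbar (fun x => exists z, 0 < z < 1 /\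
     x = Rabs (pgf f z - pgf g z) / rpow (Rabs (1 - z)) r).

Definition d_r_star (r : R) (f g : nat -> R) : Rbar :=
  Lub_Rbar (fun x => exists xi, 0 < xi /\
     x = Rabs (laplace f xi - laplace g xi) / rpow xi r).

(* f : time -> density is the (classical) solution on [0,+oo) of the kinetic
   equation  d/dt hat f_t(z) = hat f_t(hat p_X(z)) hat f_t(hat p_Y(z)) - hat f_t(z),
   z in [0,1], with initial datum f0; pX, pY are the laws of X and Y. *)
Definition kinetic_solution (pX pY f0 : nat -> R) (f : R -> nat -> R) : Prop :=
  (forall v, f 0 v = f0 v) /\
  (forall t, 0 <= t -> is_pdens (f t)) /\
  (forall z, 0 <= z <= 1 ->
     (forall t, 0 < t ->
        is_derive (fun s => pgf (f s) z) t
          (pgf (f t) (pgf pX z) * pgf (f t) (pgf pY z) - pgf (f t) z)) /\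
     filterlim (fun s => pgf (f s) z) (at_right 0) (locally (pgf f0 z))).

From Stdlib Require Import Reals Lra Lia Factorial.
From Coquelicot Require Import Coquelicot.
Open Scope R_scope.

(* Write a = pgf pX, b = pgf pY and D s z = pgf (f1 s) z - pgf (f2 s) z.  The kinetic equation
   gives d/ds (e^s D s z) = e^s (D s (a z) pgf (f1 s) (b z) + pgf (f2 s) (a z) D s (b z)), and
   generating functions are bounded by 1 on [0, 1].  Both weights w z = (1 - z)^r and
   w z = (- ln z)^r satisfy w (pgf p z) <= (mean p)^r w z: the first by Bernoulli's inequality
   1 - pgf p z <= mean p (1 - z), the second by Jensen's inequality pgf p z >= z^(mean p).
   Hence if |D 0| <= K w on (0, 1), Picard iteration of the differential inequality gives
   |D t| <= K w e^(alpha_r t), and taking suprema gives both estimates (d_r^* is the distance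
   with weight (- ln z)^r after the substitution z = e^(- xi)). *)

Lemma is_series_le (a b : nat -> R) (la lb : R) :
  is_series a la -> is_series b lb -> (forall n, a n <= b n) -> la <= lb.
Proof.
  intros Ha Hb Hab.
  apply (is_lim_seq_le (sum_n a) (sum_n b) la lb); [|exact Ha|exact Hb].
  intro n. now apply sum_n_m_le.
Qed.

Lemma is_series_ge0 (a : nat -> R) (l : R) :
  is_series a l -> (forall n, 0 <= a n) -> 0 <= l.
Proof.
  intros Ha Hpos.
  pose proof (is_series_scal_l 0 a l Ha) as H0. rewrite Rmult_0_l in H0.
  apply (is_series_le _ a 0 l H0 Ha). intro n. rewrite Rmult_0_l. apply Hpos.
Qed.

Lemma le_of_le_plus_pow_fact (x y c u : R) :
  (forall n, x <= y + c * (u ^ n / INR (fact n))) -> x <= y.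
Proof.
  intro Hx.
  assert (Hlim : is_lim_seq (fun n => y + c * (u ^ n / INR (fact n))) (y + c * 0)).
  { apply is_lim_seq_plus'; [apply is_lim_seq_const|].
    apply (is_lim_seq_scal_l _ c 0), is_lim_seq_Reals, cv_speed_pow_fact. }
  pose proof (is_lim_seq_le (fun _ => x) _ x _ Hx (is_lim_seq_const x) Hlim) as H.
  simpl in H. lra.
Qed.

Lemma exp_le_exp (x y : R) : x <= y -> exp x <= exp y.
Proof.
  intro Hxy. destruct (Rle_lt_or_eq_dec x y Hxy) as [Hlt| ->]; [|lra].
  apply Rlt_le, exp_increasing, Hlt.
Qed.

Lemma le_of_is_derive_nonpos (h h' : R -> R) (lo hi : R) : lo <= hi ->
  (forall x, lo <= x <= hi -> is_derive h x (h' x)) ->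
  (forall x, lo <= x <= hi -> h' x <= 0) -> h hi <= h lo.
Proof.
  intros Hle Hd Hneg.
  destruct (MVT_gen h lo hi h') as [c [Hc Heq]];
    rewrite ?Rmin_left, ?Rmax_right in * by exact Hle.
  - intros x Hx. apply Hd. lra.
  - intros x Hx. apply continuity_pt_filterlim, (ex_derive_continuous h).
    exists (h' x). apply Hd, Hx.
  - specialize (Hneg c Hc). nra.
Qed.

Lemma Rabs_sub_le_of_is_derive (f g f' g' : R -> R) (lo hi : R) : lo <= hi ->
  (forall x, lo <= x <= hi -> is_derive f x (f' x)) ->
  (forall x, lo <= x <= hi -> is_derive g x (g' x)) ->
  (forall x, lo <= x <= hi -> Rabs (f' x) <= g' x) ->
  Rabs (f hi - f lo) <= g hi - g lo.
Proof.
  intros Hle Hf Hg Hbnd. apply Rabs_le. split.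
  - enough (- f hi - g hi <= - f lo - g lo) by lra.
    apply (le_of_is_derive_nonpos (fun x => - f x - g x) (fun x => - f' x - g' x));
      [exact Hle| |].
    + intros x Hx. apply (is_derive_minus _ _ x _ _ (is_derive_opp _ x _ (Hf x Hx)) (Hg x Hx)).
    + intros x Hx. specialize (Hbnd x Hx). apply Rabs_le_between in Hbnd. lra.
  - enough (f hi - g hi <= f lo - g lo) by lra.
    apply (le_of_is_derive_nonpos (fun x => f x - g x) (fun x => f' x - g' x));
      [exact Hle| |].
    + intros x Hx. apply (is_derive_minus _ _ x _ _ (Hf x Hx) (Hg x Hx)).
    + intros x Hx. specialize (Hbnd x Hx). apply Rabs_le_between in Hbnd. lra.
Qed.

Lemma Rabs_sub_le_at_right (f : R -> R) (l B lo hi : R) : lo < hi ->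
  filterlim f (at_right lo) (locally l) ->
  (forall e, lo < e < hi -> Rabs (f hi - f e) <= B) -> Rabs (f hi - l) <= B.
Proof.
  intros Hlt Hlim Hbnd.
  assert (Hev : at_right lo (fun e => f hi - B <= f e <= f hi + B)).
  { apply (locally_interval _ lo (lo - 1) hi); simpl; try lra.
    intros e _ He Hlo. specialize (Hbnd e (conj Hlo He)).
    apply Rabs_le_between in Hbnd. lra. }
  pose proof (closed_filterlim_loc f _ l Hlim Hev
    (closed_and _ _ (closed_ge (f hi - B)) (closed_le (f hi + B)))) as Hl.
  apply Rabs_le_between. lra.
Qed.

Lemma pow_between_0_1 (z : R) (n : nat) : 0 <= z <= 1 -> 0 <= z ^ n <= 1.
Proof.
  intro Hz. split; [apply pow_le; lra|]. rewrite <- (pow1 n). apply pow_incr. exact Hz.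
Qed.

Lemma one_sub_mul_le_pow (z : R) (v : nat) : 0 <= z <= 1 -> 1 - INR v * (1 - z) <= z ^ v.
Proof.
  intro Hz. induction v as [|v IH]; [simpl; lra|].
  rewrite S_INR. simpl. pose proof (pos_INR v).
  assert (z * (1 - INR v * (1 - z)) <= z * z ^ v) by (apply Rmult_le_compat_l; lra).
  assert (0 <= INR v * ((1 - z) * (1 - z))) by (apply Rmult_le_pos; nra).
  nra.
Qed.

Section Pgf.

Variables (p : nat -> R) (mu : R).
Hypothesis p_dens : is_pdens p.
Hypothesis p_mean : is_series (fun v => INR v * p v) mu.

Lemma pgf_series (z : R) : 0 <= z <= 1 -> is_series (fun v => z ^ v * p v) (pgf p z).
Proof.
  destruct p_dens as [Hp Hsum]. intro Hz. apply Series_correct.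
  apply (@ex_series_le R_AbsRing R_CompleteNormedModule _ p); [|eexists; exact Hsum].
  intro n. change (norm (z ^ n * p n)) with (Rabs (z ^ n * p n)).
  destruct (pow_between_0_1 z n Hz). specialize (Hp n).
  rewrite Rabs_pos_eq by nra. nra.
Qed.

Lemma pgf_between_0_1 (z : R) : 0 <= z <= 1 -> 0 <= pgf p z <= 1.
Proof.
  intro Hz. pose proof (pgf_series z Hz) as Hs. destruct p_dens as [Hp Hsum].
  assert (Hzn : forall n, 0 <= z ^ n <= 1) by (intro; apply pow_between_0_1, Hz).
  split.
  - apply (is_series_ge0 _ _ Hs). intro n. specialize (Hp n). destruct (Hzn n). nra.
  - apply (is_series_le _ _ _ _ Hs Hsum). intro n. specialize (Hp n). destruct (Hzn n). nra.
Qed.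

Lemma one_sub_pgf_le (z : R) : 0 <= z <= 1 -> 1 - pgf p z <= mu * (1 - z).
Proof.
  intro Hz. destruct p_dens as [Hp Hsum].
  assert (HS : is_series (fun v => p v - (1 - z) * (INR v * p v)) (1 - (1 - z) * mu))
    by exact (is_series_minus _ _ _ _ Hsum (is_series_scal_l (1 - z) _ _ p_mean)).
  enough (1 - (1 - z) * mu <= pgf p z) by lra.
  apply (is_series_le _ _ _ _ HS (pgf_series z Hz)).
  intro v. pose proof (one_sub_mul_le_pow z v Hz). specialize (Hp v). nra.
Qed.

(* Jensen's inequality for v |-> z^v, via the tangent line exp x >= 1 + x. *)
Lemma exp_mean_ln_le_pgf (z : R) : 0 < z <= 1 -> exp (mu * ln z) <= pgf p z.
Proof.
  intro Hz. destruct p_dens as [Hp Hsum].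
  set (L := ln z). set (E := exp (mu * L)).
  assert (HS : is_series (fun v => E * ((1 - L * mu) * p v + L * (INR v * p v)))
                 (E * ((1 - L * mu) * 1 + L * mu)))
    by exact (is_series_scal_l E _ _ (is_series_plus _ _ _ _
                (is_series_scal_l _ _ _ Hsum) (is_series_scal_l L _ _ p_mean))).
  replace E with (E * ((1 - L * mu) * 1 + L * mu)) by ring.
  apply (is_series_le _ _ _ _ HS (pgf_series z ltac:(lra))). intro v.
  rewrite <- (Rpower_pow v z) by lra. unfold Rpower. fold L.
  replace (INR v * L) with (mu * L + (INR v - mu) * L) by ring.
  rewrite exp_plus. fold E.
  pose proof (exp_ineq1_le ((INR v - mu) * L)).
  assert (0 <= E * p v) by (apply Rmult_le_pos; [apply Rlt_le, exp_pos | apply Hp]).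
  assert (E * p v * (1 + (INR v - mu) * L) <= E * p v * exp ((INR v - mu) * L))
    by (apply Rmult_le_compat_l; lra).
  nra.
Qed.

Lemma pgf_pos (z : R) : 0 < z <= 1 -> 0 < pgf p z.
Proof.
  intro Hz. pose proof (exp_pos (mu * ln z)). pose proof (exp_mean_ln_le_pgf z Hz). lra.
Qed.

Hypothesis p_nondegenerate : p 0%nat <> 1.

Lemma pgf_lt_1 (z : R) : 0 <= z < 1 -> pgf p z < 1.
Proof.
  intro Hz. destruct p_dens as [Hp Hsum].
  assert (Htail : is_series (fun k => p (S k)) (1 - p 0%nat)).
  { apply is_series_incr_1. change (plus (1 - p 0%nat) (p 0%nat)) with (1 - p 0%nat + p 0%nat).
    now replace (1 - p 0%nat + p 0%nat) with 1 by ring. }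
  assert (Hztail : is_series (fun k => z ^ S k * p (S k)) (pgf p z - p 0%nat)).
  { apply (is_series_incr_1 (fun v => z ^ v * p v)).
    change (plus (pgf p z - p 0%nat) (z ^ 0 * p 0%nat))
      with (pgf p z - p 0%nat + z ^ 0 * p 0%nat).
    replace (pgf p z - p 0%nat + z ^ 0 * p 0%nat) with (pgf p z) by (simpl; ring).
    apply pgf_series. lra. }
  assert (Hle : pgf p z - p 0%nat <= z * (1 - p 0%nat)).
  { assert (Hzt : is_series (fun k => z * p (S k)) (z * (1 - p 0%nat)))
      by exact (is_series_scal_l z _ _ Htail).
    apply (is_series_le _ _ _ _ Hztail Hzt). intro k. simpl.
    destruct (pow_between_0_1 z k ltac:(lra)).
    assert (0 <= z * p (S k)) by (apply Rmult_le_pos; [lra | apply Hp]).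
    nra. }
  assert (0 < 1 - p 0%nat).
  { pose proof (is_series_ge0 _ _ Htail (fun k => Hp (S k))).
    destruct (Req_dec (1 - p 0%nat) 0); [exfalso; apply p_nondegenerate|]; lra. }
  nra.
Qed.

End Pgf.

Lemma rpow_ge0 (x r : R) : 0 <= rpow x r.
Proof. unfold rpow. destruct (Rle_dec x 0); [lra|]. apply Rlt_le, exp_pos. Qed.

Lemma rpow_gt0 (x r : R) : 0 < x -> 0 < rpow x r.
Proof. intro Hx. unfold rpow. destruct (Rle_dec x 0); [lra|]. apply exp_pos. Qed.

Lemma rpow_le_mul (x y m r : R) : 0 < x -> 0 < y -> 0 < r -> x <= m * y ->
  rpow x r <= rpow m r * rpow y r.
Proof.
  intros Hx Hy Hr Hxy.
  assert (Hm : 0 < m) by nra.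
  unfold rpow. destruct (Rle_dec x 0), (Rle_dec m 0), (Rle_dec y 0); try lra.
  rewrite Rpower_mult_distr by lra. apply Rle_Rpower_l; lra.
Qed.

Lemma is_series_mean (p : nat -> R) (r : R) : is_pdens p -> 1 <= r -> finite_rmoment p r ->
  is_series (fun v => INR v * p v) (mean p).
Proof.
  intros [Hp _] Hr Hmom. apply Series_correct.
  apply (@ex_series_le R_AbsRing R_CompleteNormedModule _ (fun v => rpow (INR v) r * p v));
    [|exact Hmom].
  intro n.
  change (norm (INR n * p n)) with (Rabs (INR n * p n)).
  specialize (Hp n). rewrite Rabs_pos_eq by (apply Rmult_le_pos; [apply pos_INR | exact Hp]).
  apply Rmult_le_compat_r; [exact Hp|].
  unfold rpow. destruct (Rle_dec (INR n) 0) as [Hn|Hn]; [exact Hn|].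
  assert (H1 : 1 <= INR n) by (destruct n; [simpl in Hn; lra | apply (le_INR 1); lia]).
  rewrite <- (Rpower_1 (INR n)) at 1 by lra. apply Rle_Rpower; lra.
Qed.

Section Weights.

Variables (p : nat -> R) (mu r z : R).
Hypotheses (p_dens : is_pdens p) (p_nondegenerate : p 0%nat <> 1).
Hypothesis p_mean : is_series (fun v => INR v * p v) mu.
Hypotheses (r_pos : 0 < r) (z_range : 0 < z < 1).

Lemma rpow_one_sub_pgf_le :
  rpow (Rabs (1 - pgf p z)) r <= rpow mu r * rpow (Rabs (1 - z)) r.
Proof.
  pose proof (pgf_lt_1 p p_dens p_nondegenerate z ltac:(lra)).
  pose proof (one_sub_pgf_le p mu p_dens p_mean z ltac:(lra)).
  rewrite !Rabs_pos_eq by lra. apply rpow_le_mul; lra.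
Qed.

Lemma rpow_neg_ln_pgf_le : rpow (- ln (pgf p z)) r <= rpow mu r * rpow (- ln z) r.
Proof.
  pose proof (pgf_pos p mu p_dens p_mean z ltac:(lra)).
  pose proof (pgf_lt_1 p p_dens p_nondegenerate z ltac:(lra)).
  pose proof (exp_mean_ln_le_pgf p mu p_dens p_mean z ltac:(lra)) as Hjensen.
  assert (ln (pgf p z) < 0) by (rewrite <- ln_1; apply ln_increasing; lra).
  assert (ln z < 0) by (rewrite <- ln_1; apply ln_increasing; lra).
  assert (mu * ln z <= ln (pgf p z)).
  { rewrite <- (ln_exp (mu * ln z)). apply ln_le; [apply exp_pos | exact Hjensen]. }
  apply rpow_le_mul; lra.
Qed.

End Weights.

Section PicardIteration.

Variables (F1 F2 : R -> R -> R) (a b w : R -> R) (cX cY K t : R).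
Hypotheses (cX_ge0 : 0 <= cX) (cY_ge0 : 0 <= cY) (K_ge0 : 0 <= K).
Hypothesis ab_range : forall z, 0 < z < 1 -> 0 < a z < 1 /\ 0 < b z < 1.
Hypothesis w_ge0 : forall z, 0 < z < 1 -> 0 <= w z.
Hypothesis w_a_le : forall z, 0 < z < 1 -> w (a z) <= cX * w z.
Hypothesis w_b_le : forall z, 0 < z < 1 -> w (b z) <= cY * w z.
Hypothesis F1_bounded : forall s z, 0 <= s -> 0 < z < 1 -> Rabs (F1 s z) <= 1.
Hypothesis F2_bounded : forall s z, 0 <= s -> 0 < z < 1 -> Rabs (F2 s z) <= 1.
Hypothesis F1_derive : forall s z, 0 < s -> 0 < z < 1 ->
  is_derive (fun u => F1 u z) s (F1 s (a z) * F1 s (b z) - F1 s z).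
Hypothesis F2_derive : forall s z, 0 < s -> 0 < z < 1 ->
  is_derive (fun u => F2 u z) s (F2 s (a z) * F2 s (b z) - F2 s z).
Hypothesis F1_at_0 : forall z, 0 < z < 1 ->
  filterlim (fun u => F1 u z) (at_right 0) (locally (F1 0 z)).
Hypothesis F2_at_0 : forall z, 0 < z < 1 ->
  filterlim (fun u => F2 u z) (at_right 0) (locally (F2 0 z)).
Hypothesis F_init : forall z, 0 < z < 1 -> Rabs (F1 0 z - F2 0 z) <= K * w z.

(* The factor [exp s] absorbs the loss term [- F s z] of the equation. *)
Let phi (s z : R) : R := exp s * (F1 s z - F2 s z).

(* [2 exp t] bounds [phi] on [0, t], and each iteration integrates the two gain terms,
   whence the remainder [(2 s)^n / n!]. *)
Let picard (n : nat) (s z : R) : R :=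
  K * w z * exp ((cX + cY) * s) + 2 * exp t * (2 * s) ^ n / INR (fact n).

Lemma phi_derive (s z : R) : 0 < s -> 0 < z < 1 ->
  is_derive (fun u => phi u z) s (phi s (a z) * F1 s (b z) + F2 s (a z) * phi s (b z)).
Proof.
  intros Hs Hz.
  assert (Hexp : is_derive exp s (exp s)) by apply is_derive_Reals, derivable_pt_lim_exp.
  pose proof (is_derive_mult _ _ s _ _ Hexp
    (is_derive_minus _ _ s _ _ (F1_derive s z Hs Hz) (F2_derive s z Hs Hz)) Rmult_comm) as H.
  eapply (eq_ind _ (is_derive (fun u => phi u z) s)); [exact H|].
  unfold phi, minus, opp, plus, mult; simpl. ring.
Qed.

Lemma phi_at_0 (z : R) : 0 < z < 1 ->
  filterlim (fun u => phi u z) (at_right 0) (locally (phi 0 z)).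
Proof.
  intro Hz.
  apply (filterlim_comp_2 (G := locally (exp 0)) (H := locally (F1 0 z - F2 0 z))
           exp (fun u => F1 u z - F2 u z) Rmult).
  - apply (filterlim_filter_le_1 _ (@filter_le_within R (locally 0) _ (fun x => 0 < x))).
    apply continuous_exp.
  - apply (filterlim_comp_2 (G := locally (F1 0 z)) (H := locally (- F2 0 z))
             (fun u => F1 u z) (fun u => - F2 u z) Rplus).
    + exact (F1_at_0 z Hz).
    + eapply filterlim_comp; [exact (F2_at_0 z Hz) | apply (filterlim_opp (F2 0 z))].
    + apply (filterlim_plus (F1 0 z) (- F2 0 z)).
  - apply (filterlim_mult (exp 0) (F1 0 z - F2 0 z)).
Qed.

Lemma picard_derive (n : nat) (s z : R) :
  is_derive (fun u => picard (S n) u z) s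
    ((cX + cY) * (K * w z * exp ((cX + cY) * s)) + 2 * exp t * (2 * s) ^ n / INR (fact n) * 2).
Proof.
  unfold picard. auto_derive; [easy|].
  change (match n with 0%nat => 1 | S _ => INR n + 1 end) with (INR (S n)).
  replace (INR (fact n + n * fact n)) with (INR (S n) * INR (fact n))
    by (rewrite <- mult_INR; reflexivity).
  pose proof (INR_fact_neq_0 n). pose proof (not_0_INR (S n) (Nat.neq_succ_0 n)).
  field. split; assumption.
Qed.

Lemma phi_le_picard_0 (s z : R) : 0 <= s <= t -> 0 < z < 1 -> Rabs (phi s z) <= picard 0 s z.
Proof.
  intros Hs Hz. unfold phi, picard.
  rewrite Rabs_mult, Rabs_pos_eq by apply Rlt_le, exp_pos.
  pose proof (F1_bounded s z (proj1 Hs) Hz). pose proof (F2_bounded s z (proj1 Hs) Hz).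
  pose proof (Rabs_triang (F1 s z) (- F2 s z)). rewrite Rabs_Ropp in H1.
  assert (exp s <= exp t) by (apply exp_le_exp; lra).
  assert (0 <= K * w z * exp ((cX + cY) * s))
    by (apply Rmult_le_pos; [apply Rmult_le_pos, w_ge0 | apply Rlt_le, exp_pos]; assumption).
  pose proof (exp_pos s). simpl. unfold Rminus in *. nra.
Qed.

Lemma picard_at_0 (n : nat) (z : R) : picard (S n) 0 z = K * w z.
Proof.
  unfold picard. rewrite Rmult_0_r, exp_0, Rmult_0_r, pow_i by lia.
  pose proof (INR_fact_neq_0 (S n)). field. assumption.
Qed.

Lemma picard_ge_at_0 (n : nat) (s z : R) : 0 <= s -> 0 < z < 1 ->
  picard (S n) 0 z <= picard (S n) s z.
Proof.
  intros Hs Hz. rewrite picard_at_0. unfold picard.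
  assert (1 <= exp ((cX + cY) * s))
    by (rewrite <- exp_0; apply exp_le_exp; apply Rmult_le_pos; lra).
  assert (0 <= 2 * exp t * (2 * s) ^ S n / INR (fact (S n))).
  { apply Rmult_le_pos; [apply Rmult_le_pos; [pose proof (exp_pos t); lra | apply pow_le; lra]|].
    apply Rlt_le, Rinv_0_lt_compat, INR_fact_lt_0. }
  pose proof (w_ge0 z Hz).
  assert (0 <= K * w z) by (apply Rmult_le_pos; assumption).
  nra.
Qed.

Section Step.

Variable n : nat.
Hypothesis phi_le_picard_n :
  forall s z, 0 <= s <= t -> 0 < z < 1 -> Rabs (phi s z) <= picard n s z.

Lemma gain_le_picard_derive (s z : R) : 0 <= s <= t -> 0 < z < 1 ->
  Rabs (phi s (a z) * F1 s (b z) + F2 s (a z) * phi s (b z)) <=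
    (cX + cY) * (K * w z * exp ((cX + cY) * s)) + 2 * exp t * (2 * s) ^ n / INR (fact n) * 2.
Proof.
  intros Hs Hz. destruct (ab_range z Hz) as [Ha Hb].
  pose proof (phi_le_picard_n s (a z) Hs Ha) as Hpa.
  pose proof (phi_le_picard_n s (b z) Hs Hb) as Hpb.
  pose proof (F1_bounded s (b z) (proj1 Hs) Hb). pose proof (F2_bounded s (a z) (proj1 Hs) Ha).
  pose proof (Rabs_pos (phi s (a z))). pose proof (Rabs_pos (phi s (b z))).
  pose proof (w_a_le z Hz). pose proof (w_b_le z Hz).
  assert (HE : 0 < exp ((cX + cY) * s)) by apply exp_pos.
  assert (K * w (a z) <= K * (cX * w z)) by (apply Rmult_le_compat_l; assumption).
  assert (K * w (b z) <= K * (cY * w z)) by (apply Rmult_le_compat_l; assumption).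
  eapply Rle_trans; [apply Rabs_triang|]. rewrite !Rabs_mult.
  unfold picard in Hpa, Hpb. nra.
Qed.

Lemma phi_le_picard_S (s z : R) : 0 <= s <= t -> 0 < z < 1 ->
  Rabs (phi s z) <= picard (S n) s z.
Proof.
  intros Hs Hz.
  assert (H0 : Rabs (phi 0 z) <= picard (S n) 0 z).
  { rewrite picard_at_0. unfold phi. rewrite exp_0, Rmult_1_l. apply F_init, Hz. }
  destruct (Req_dec s 0) as [->|Hs0]; [exact H0|].
  assert (Hincr : Rabs (phi s z - phi 0 z) <= picard (S n) s z - picard (S n) 0 z).
  { apply (Rabs_sub_le_at_right (fun u => phi u z) _ _ 0); [lra | apply phi_at_0, Hz|].
    intros e He. pose proof (picard_ge_at_0 n e z ltac:(lra) Hz).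
    enough (Rabs (phi s z - phi e z) <= picard (S n) s z - picard (S n) e z) by lra.
    apply (Rabs_sub_le_of_is_derive (fun u => phi u z) (fun u => picard (S n) u z)
             (fun u => phi u (a z) * F1 u (b z) + F2 u (a z) * phi u (b z))
             (fun u => (cX + cY) * (K * w z * exp ((cX + cY) * u))
                         + 2 * exp t * (2 * u) ^ n / INR (fact n) * 2)); [lra| | |].
    - intros x Hx. apply phi_derive; [lra | exact Hz].
    - intros x Hx. apply picard_derive.
    - intros x Hx. apply gain_le_picard_derive; [lra | exact Hz]. }
  pose proof (Rabs_triang (phi s z - phi 0 z) (phi 0 z)).
  replace (phi s z - phi 0 z + phi 0 z) with (phi s z) in H by ring.
  lra.
Qed.

End Step.

Lemma phi_le_picard (n : nat) (s z : R) : 0 <= s <= t -> 0 < z < 1 ->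
  Rabs (phi s z) <= picard n s z.
Proof.
  revert s z. induction n as [|n IH].
  - exact phi_le_picard_0.
  - exact (phi_le_picard_S n IH).
Qed.

Lemma solutions_difference_le (z : R) : 0 <= t -> 0 < z < 1 ->
  Rabs (F1 t z - F2 t z) <= K * w z * exp ((cX + cY - 1) * t).
Proof.
  intros Ht Hz.
  assert (Hphi : Rabs (phi t z) <= K * w z * exp ((cX + cY) * t)).
  { apply (le_of_le_plus_pow_fact _ _ (2 * exp t) (2 * t)). intro n.
    pose proof (phi_le_picard n t z ltac:(lra) Hz) as H. unfold picard in H.
    unfold Rdiv in *. lra. }
  unfold phi in Hphi. rewrite Rabs_mult, Rabs_pos_eq in Hphi by apply Rlt_le, exp_pos.
  replace ((cX + cY) * t) with (t + (cX + cY - 1) * t) in Hphi by ring.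
  rewrite exp_plus in Hphi.
  apply (Rmult_le_reg_l (exp t)); [apply exp_pos | lra].
Qed.

End PicardIteration.

Lemma Lub_Rbar_ratio_le (P : R -> Prop) (w h0 h1 : R -> R) (c : R) :
  0 < c -> (exists z, P z) -> (forall z, P z -> 0 < w z) ->
  (forall K, 0 <= K -> (forall z, P z -> Rabs (h0 z) <= K * w z) ->
     forall z, P z -> Rabs (h1 z) <= K * w z * c) ->
  Rbar_le (Lub_Rbar (fun x => exists z, P z /\ x = Rabs (h1 z) / w z))
          (Rbar_mult (Lub_Rbar (fun x => exists z, P z /\ x = Rabs (h0 z) / w z)) c).
Proof.
  intros Hc [z0 Hz0] Hw Hscale.
  assert (Hmem : forall z, P z ->
            Rbar_le (Rabs (h0 z) / w z)
                    (Lub_Rbar (fun x => exists z, P z /\ x = Rabs (h0 z) / w z)))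
    by (intros z Hz; apply (proj1 (Lub_Rbar_correct _)); exists z; auto).
  assert (Hratio0 : 0 <= Rabs (h0 z0) / w z0)
    by (apply Rmult_le_pos; [apply Rabs_pos | apply Rlt_le, Rinv_0_lt_compat, Hw, Hz0]).
  destruct (Lub_Rbar (fun x => exists z, P z /\ x = Rabs (h0 z) / w z)) as [K| |];
    pose proof (Hmem z0 Hz0) as HK; simpl in HK; [| |contradiction].
  - apply (proj2 (Lub_Rbar_correct _)). intros x [z [Hz ->]]. simpl.
    assert (Hh0 : forall y, P y -> Rabs (h0 y) <= K * w y).
    { intros y Hy. specialize (Hmem y Hy). simpl in Hmem. pose proof (Hw y Hy).
      apply (Rmult_le_reg_r (/ w y)); [apply Rinv_0_lt_compat; lra|].
      replace (K * w y * / w y) with K by (field; lra). exact Hmem. }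
    pose proof (Hscale K ltac:(lra) Hh0 z Hz). pose proof (Hw z Hz).
    apply (Rmult_le_reg_r (w z)); [lra|].
    replace (Rabs (h1 z) / w z * w z) with (Rabs (h1 z)) by (field; lra). nra.
  - replace (Rbar_mult p_infty c) with p_infty.
    + destruct (Lub_Rbar _); simpl; trivial.
    + simpl. destruct (Rle_dec 0 c) as [H|H]; [|lra].
      destruct (Rle_lt_or_eq_dec 0 c H); [reflexivity | lra].
Qed.

Definition pgf_dist (w : R -> R) (f g : nat -> R) : Rbar :=
  Lub_Rbar (fun x => exists z, 0 < z < 1 /\ x = Rabs (pgf f z - pgf g z) / w z).

Lemma laplace_pgf (f : nat -> R) (xi : R) : laplace f xi = pgf f (exp (- xi)).
Proof.
  unfold laplace, pgf. apply Series_ext. intro v.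
  rewrite <- Rpower_pow by apply exp_pos. unfold Rpower. rewrite ln_exp.
  f_equal. f_equal. ring.
Qed.

Lemma d_r_star_pgf_dist (r : R) (f g : nat -> R) :
  d_r_star r f g = pgf_dist (fun z => rpow (- ln z) r) f g.
Proof.
  apply Lub_Rbar_eqset. intro x. split.
  - intros [xi [Hxi ->]]. exists (exp (- xi)). split.
    + split; [apply exp_pos|]. rewrite <- exp_0. apply exp_increasing. lra.
    + rewrite !laplace_pgf, ln_exp, Ropp_involutive. reflexivity.
  - intros [z [Hz ->]]. exists (- ln z). split.
    + enough (ln z < 0) by lra. rewrite <- ln_1. apply ln_increasing; lra.
    + rewrite !laplace_pgf, Ropp_involutive, exp_ln by lra. reflexivity.
Qed.

Section Kinetic.

Variables (pX pY f01 f02 : nat -> R) (f1 f2 : R -> nat -> R) (r : R).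
Hypotheses (pX_dens : is_pdens pX) (pY_dens : is_pdens pY).
Hypotheses (pX_nondegenerate : pX 0%nat <> 1) (pY_nondegenerate : pY 0%nat <> 1).
Hypothesis r_gt1 : 1 < r.
Hypotheses (pX_moment : finite_rmoment pX r) (pY_moment : finite_rmoment pY r).
Hypotheses (f1_sol : kinetic_solution pX pY f01 f1) (f2_sol : kinetic_solution pX pY f02 f2).

Variable w : R -> R.
Hypothesis w_pos : forall z, 0 < z < 1 -> 0 < w z.
Hypothesis w_pgf_le : forall p mu z, is_pdens p -> p 0%nat <> 1 ->
  is_series (fun v => INR v * p v) mu -> 0 < z < 1 -> w (pgf p z) <= rpow mu r * w z.

Let alpha := rpow (mean pX) r + rpow (mean pY) r - 1.

Lemma kinetic_pgf_difference_le (K t z : R) : 0 <= K ->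
  (forall y, 0 < y < 1 -> Rabs (pgf f01 y - pgf f02 y) <= K * w y) ->
  0 < t -> 0 < z < 1 -> Rabs (pgf (f1 t) z - pgf (f2 t) z) <= K * w z * exp (alpha * t).
Proof.
  intros HK Hinit Ht Hz.
  destruct f1_sol as [init1 [dens1 eq1]], f2_sol as [init2 [dens2 eq2]].
  assert (pgf_at_0 : forall (f : R -> nat -> R) f0 y, (forall v, f 0 v = f0 v) ->
            pgf (f 0) y = pgf f0 y)
    by (intros f f0 y Hf; apply Series_ext; intro v; rewrite Hf; reflexivity).
  pose proof (is_series_mean pX r pX_dens (Rlt_le _ _ r_gt1) pX_moment) as HmX.
  pose proof (is_series_mean pY r pY_dens (Rlt_le _ _ r_gt1) pY_moment) as HmY.
  apply (solutions_difference_le (fun s y => pgf (f1 s) y) (fun s y => pgf (f2 s) y)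
           (pgf pX) (pgf pY) w); try apply rpow_ge0; try lra; try assumption.
  - intros y Hy. split; split.
    + apply (pgf_pos _ _ pX_dens HmX). lra.
    + apply (pgf_lt_1 _ pX_dens pX_nondegenerate). lra.
    + apply (pgf_pos _ _ pY_dens HmY). lra.
    + apply (pgf_lt_1 _ pY_dens pY_nondegenerate). lra.
  - intros y Hy. apply Rlt_le, w_pos, Hy.
  - intros y Hy. apply w_pgf_le; assumption.
  - intros y Hy. apply w_pgf_le; assumption.
  - intros s y Hs Hy. pose proof (pgf_between_0_1 _ (dens1 s Hs) y ltac:(lra)).
    rewrite Rabs_pos_eq; lra.
  - intros s y Hs Hy. pose proof (pgf_between_0_1 _ (dens2 s Hs) y ltac:(lra)).
    rewrite Rabs_pos_eq; lra.
  - intros s y Hs Hy. apply (eq1 y ltac:(lra)), Hs.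
  - intros s y Hs Hy. apply (eq2 y ltac:(lra)), Hs.
  - intros y Hy. rewrite (pgf_at_0 f1 f01 y init1). apply (eq1 y ltac:(lra)).
  - intros y Hy. rewrite (pgf_at_0 f2 f02 y init2). apply (eq2 y ltac:(lra)).
  - intros y Hy. rewrite (pgf_at_0 f1 f01 y init1), (pgf_at_0 f2 f02 y init2). auto.
Qed.

Lemma pgf_dist_kinetic_le (t : R) : 0 < t ->
  Rbar_le (pgf_dist w (f1 t) (f2 t)) (Rbar_mult (pgf_dist w f01 f02) (exp (alpha * t))).
Proof.
  intro Ht. apply Lub_Rbar_ratio_le.
  - apply exp_pos.
  - exists (/ 2). lra.
  - exact w_pos.
  - intros K HK Hinit z Hz. apply kinetic_pgf_difference_le; assumption.
Qed.

End Kinetic.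

Theorem theorem3p2 (pX pY : nat -> R) (r : R) (f01 f02 : nat -> R) (m0 : R)
  (f1 f2 : R -> nat -> R) :
  is_pdens pX -> is_pdens pY ->
  pX 0%nat <> 1 -> pY 0%nat <> 1 ->
  1 < r <= 2 ->
  finite_rmoment pX r -> finite_rmoment pY r ->
  is_pdens f01 -> is_pdens f02 ->
  is_series (fun v => INR v * f01 v) m0 ->
  is_series (fun v => INR v * f02 v) m0 ->
  kinetic_solution pX pY f01 f1 ->
  kinetic_solution pX pY f02 f2 ->
  let alpha_r := rpow (mean pX) r + rpow (mean pY) r - 1 in
  forall t, 0 < t ->
    Rbar_le (d_r r (f1 t) (f2 t)) (Rbar_mult (d_r r f01 f02) (exp (alpha_r * t))) /\
    Rbar_le (d_r_star r (f1 t) (f2 t))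
            (Rbar_mult (d_r_star r f01 f02) (exp (alpha_r * t))).
Proof.
  intros HX HY HX0 HY0 [Hr _] MX MY _ _ _ _ S1 S2 alpha_r t Ht. split.
  - apply (pgf_dist_kinetic_le pX pY f01 f02 f1 f2 r); try assumption.
    + intros z Hz. apply rpow_gt0. rewrite Rabs_pos_eq; lra.
    + intros p mu z Hp Hp0 Hmu Hz. apply rpow_one_sub_pgf_le; auto; lra.
  - rewrite !d_r_star_pgf_dist.
    apply (pgf_dist_kinetic_le pX pY f01 f02 f1 f2 r); try assumption.
    + intros z Hz. apply rpow_gt0.
      enough (ln z < 0) by lra. rewrite <- ln_1. apply ln_increasing; lra.
    + intros p mu z Hp Hp0 Hmu Hz. apply rpow_neg_ln_pgf_le; auto; lra.
Qed.
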